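(* Under the standing assumptions, for $0\le i\le d$ we have, as subspaces of $V$: (i) $E_iV+E_{i+1}V+\cdots+E_dV=U_i+U_{i+1}+\cdots+U_d$; (ii) $E^*_0V+E^*_1V+\cdots+E^*_iV=U_0+U_1+\cdots+U_i$.
   Context: Let $\mathbb F$ be an algebraically closed field, $d\ge0$, and $q,a,b,c,a^*,b^*,c^*\in\mathbb F$ with $q,b,c,b^*,c^*$ nonzero and $q^2\ne\pm1$. Put $\theta_i=a+bq^{2i-d}+cq^{d-2i}$ and $\theta^*_i=a^*+b^*q^{2i-d}+c^*q^{d-2i}$ ($0\le i\le d$), and assume $\theta_0,\dots,\theta_d$ are mutually distinct and $\theta^*_0,\dots,\theta^*_d$ are mutually distinct (this forces $q^{2i}\ne1$ for $1\le i\le d$). $U_q(\widehat{\mathfrak{sl}}_2)$ is the associative unital $\mathbb F$-algebra with generators $e_i^{\pm},K_i^{\pm1}$ ($i\in\{0,1\}$) and relations $K_iK_i^{-1}=K_i^{-1}K_i=1$, $K_0K_1=K_1K_0$, $K_ie_i^{\pm}K_i^{-1}=q^{\pm2}e_i^{\pm}$, $K_ie_j^{\pm}K_i^{-1}=q^{\mp2}e_j^{\pm}$ ($i\ne j$), $e_i^+e_i^--e_i^-e_i^+=(K_i-K_i^{-1})/(q-q^{-1})$, $e_0^{\pm}e_1^{\mp}=e_1^{\mp}e_0^{\pm}$, and the $q$-Serre relations $(e_i^\pm)^3e_j^\pm-[3]_q(e_i^\pm)^2e_j^\pm e_i^\pm+[3]_qe_i^\pm e_j^\pm(e_i^\pm)^2-e_j^\pm(e_i^\pm)^3=0$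 ($i\ne j$), where $[3]_q=q^2+1+q^{-2}$. Tensor products of modules are formed via $e_i^+(v\otimes w)=e_i^+v\otimes K_iw+v\otimes e_i^+w$, $e_i^-(v\otimes w)=e_i^-v\otimes w+K_i^{-1}v\otimes e_i^-w$, $K_i(v\otimes w)=K_iv\otimes K_iw$. For nonzero $\alpha\in\mathbb F$, $V(\alpha)$ is the module with basis $x,y$ and $K_1x=qx$, $K_1y=q^{-1}y$, $e_1^-x=y$, $e_1^-y=0$, $e_1^+x=0$, $e_1^+y=x$, $K_0x=q^{-1}x$, $K_0y=qy$, $e_0^-x=0$, $e_0^-y=q\alpha^{-1}x$, $e_0^+x=q^{-1}\alpha y$, $e_0^+y=0$. $V=V(\alpha_1)\otimes\cdots\otimes V(\alpha_d)$ with nonzero $\alpha_i\in\mathbb F$ (for $d=0$, the trivial module where each $e_i^\pm$ acts as $0$ and each $K_i^{\pm1}$ as $1$). For $0\le i\le d$, $U_i\subseteq V$ is the span of the basis vectors $v_1\otimes\cdots\otimes v_d$ ($v_k\in\{x,y\}$) with exactly $i$ factors equal to $y$. Fix $u,v,u^*,v^*\in\mathbb F$ with $uv^*=-bb^*q^{-1}(q-q^{-1})^2$, $vu^*=-cc^*q^{-1}(q-q^{-1})^2$; set $R=ue_0^++ve_1^-K_1$, $L=u^*e_1^++v^*e_0^-K_0$, $A=a1+bK_0+cK_1+R$, $A^*=a^*1+b^*K_0+c^*K_1+L$, and $E_i=\prod_{0\le j\le d,\,j\ne i}(A-\theta_j1)/(\theta_i-\theta_j)$, $E^*_i=\prod_{0\le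 j\le d,\,j\ne i}(A^*-\theta^*_j1)/(\theta^*_i-\theta^*_j)$ in $U_q(\widehat{\mathfrak{sl}}_2)$. *)

From HB Require Import structures.
From mathcomp Require Import all_boot all_order all_algebra.
Set Implicit Arguments. Unset Strict Implicit. Unset Printing Implicit Defensive.
Import Order.TTheory GRing.Theory Num.Theory.
Local Open Scope ring_scope.

Section Uq.
Variables (F : fieldType) (q : F) (d : nat) (alpha : 'I_d -> F).

(* Basis of V = V(alpha_1) (x) ... (x) V(alpha_d): functions t : 'I_d -> bool,
   t k = false means the (k+1)-th factor is x, t k = true means it is y.
   Position k : 'I_d carries the factor V(alpha k). *)
Definition basisT := {ffun 'I_d -> bool}.
Definition dimV := #|{: basisT}|.

Definition K0val (b : bool) : F := if b then q else q^-1.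
Definition K1val (b : bool) : F := if b then q^-1 else q.

(* Single-factor coefficients: coefficient of basis vector t in g . s. *)
Definition e1m1 (k : 'I_d) (s t : bool) : F := if ~~ s && t then 1 else 0.
Definition e1p1 (k : 'I_d) (s t : bool) : F := if s && ~~ t then 1 else 0.
Definition e0m1 (k : 'I_d) (s t : bool) : F := if s && ~~ t then q / alpha k else 0.
Definition e0p1 (k : 'I_d) (s t : bool) : F := if ~~ s && t then alpha k / q else 0.

(* Iterated coproduct (from the given tensor product rules):
   e^+ acts as sum_k 1 (x) .. (x) 1 (x) e^+ (x) K (x) .. (x) K   (e^+ in slot k)
   e^- acts as sum_k K^-1 (x) .. (x) K^-1 (x) e^- (x) 1 (x) .. (x) 1
   K   acts as K (x) .. (x) K.
   coef* Kv e s t = coefficient of basis vector t in (generator . s). *)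
Definition coefP (Kv : bool -> F) (e : 'I_d -> bool -> bool -> F) (s t : basisT) : F :=
  \sum_(k < d) ((\prod_(j < d | (j < k)%N) (s j == t j)%:R) * e k (s k) (t k) *
                 \prod_(j < d | (k < j)%N) ((s j == t j)%:R * Kv (s j))).
Definition coefM (Kv : bool -> F) (e : 'I_d -> bool -> bool -> F) (s t : basisT) : F :=
  \sum_(k < d) ((\prod_(j < d | (j < k)%N) ((s j == t j)%:R * (Kv (s j))^-1)) *
                 e k (s k) (t k) * \prod_(j < d | (k < j)%N) (s j == t j)%:R).
Definition coefK (Kv : bool -> F) (s t : basisT) : F :=
  (s == t)%:R * \prod_(j < d) Kv (s j).

(* Matrix of an operator acting on column vectors: entry (row t, column s)
   is the coefficient of basis vector t in (operator . s). So the matrix of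
   a product g h of operators is (mx g) *m (mx h). *)
Definition opmx (c : basisT -> basisT -> F) : 'M[F]_dimV :=
  \matrix_(i, j) c (enum_val j) (enum_val i).

Definition K0mx := opmx (coefK K0val).
Definition K1mx := opmx (coefK K1val).
Definition e0pmx := opmx (coefP K0val e0p1).
Definition e1pmx := opmx (coefP K1val e1p1).
Definition e0mmx := opmx (coefM K0val e0m1).
Definition e1mmx := opmx (coefM K1val e1m1).

(* The subspace U_i: span of basis vectors with exactly i factors equal to y,
   given as the row space of a diagonal 0/1 matrix. *)
Definition Umx (i : nat) : 'M[F]_dimV :=
  \matrix_(a, b) ((a == b) && (#|[pred k | (enum_val a : basisT) k]| == i))%:R.

(* The subspace M V (image of the operator with matrix M acting on columns). *)
Definition img (M : 'M[F]_dimV) : 'M[F]_dimV := M^T.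

Definition Amx (a b c u v : F) : 'M[F]_dimV :=
  a%:M + b *: K0mx + c *: K1mx + (u *: e0pmx + v *: (e1mmx *m K1mx)).
Definition Asmx (as_ bs cs us vs : F) : 'M[F]_dimV :=
  as_%:M + bs *: K0mx + cs *: K1mx + (us *: e1pmx + vs *: (e0mmx *m K0mx)).

Definition Eidem (A : 'M[F]_dimV) (th : nat -> F) (i : nat) : 'M[F]_dimV :=
  foldr (fun j M => M *m ((th i - th j)^-1 *: (A - (th j)%:M))) 1%:M
        [seq j <- iota 0 d.+1 | j != i].

End Uq.

Definition theta (F : fieldType) (q a b c : F) (d i : nat) : F :=
  a + b * q ^ (Posz (2 * i)%N - Posz d) + c * q ^ (Posz d - Posz (2 * i)%N).

From Pilot Require Import Defs.
From HB Require Import structures.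
From mathcomp Require Import all_boot all_order all_algebra.
Set Implicit Arguments. Unset Strict Implicit. Unset Printing Implicit Defensive.
Import Order.TTheory GRing.Theory Num.Theory.
Local Open Scope ring_scope.

(* Grade a basis vector of V by its number of y-factors, so that U_k is the
   grade-k part.  K_0 and K_1 act on U_k by the scalars q^(2k-d) and q^(d-2k);
   e_0^+ and e_1^- raise the grade by one, e_1^+ and e_0^- lower it.  Hence
   A = diag(theta_grade) + (grade-raising part) is block lower triangular and
   A* = diag(theta*_grade) + (grade-lowering part) is block upper triangular.

   For such a triangular operator the statement is pure linear algebra.  Writing
   E_j = l_j(A) with the Lagrange basis polynomials l_j at theta_0, ..., theta_d:
   (A - theta_m) pushes U_{>=m} into U_{>=m+1}, so prod_{l<i}(A - theta_l) maps V
   into U_{>=i} and prod_{l>=i}(A - theta_l) kills U_{>=i}.  Since l_j is a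
   multiple of the first product for j >= i and of the second for j < i, and
   sum_j l_j = 1, the E_j with j >= i span exactly U_{>=i}. *)

Section LagrangeBasis.
Variables (F : fieldType) (th : nat -> F) (d : nat).

Definition lagrange (j : nat) : {poly F} :=
  \prod_(0 <= l < d.+1 | l != j) ((th j - th l)^-1 *: ('X - (th l)%:P)).

Lemma lagrangeE j : lagrange j =
  (\prod_(0 <= l < d.+1 | l != j) (th j - th l)^-1)
    *: \prod_(0 <= l < d.+1 | l != j) ('X - (th l)%:P).
Proof.
rewrite /lagrange -mul_polyC rmorph_prod -big_split /=.
by apply: eq_bigr => l _; rewrite mul_polyC.
Qed.

Lemma lagrange_factor (P : pred nat) j : ~~ P j ->
  exists r, lagrange j = r * \prod_(0 <= l < d.+1 | P l) ('X - (th l)%:P).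
Proof.
move=> nPj; rewrite lagrangeE [X in _ *: X](bigID P) /=.
set c := \prod_(_ <= _ < _ | _) _; set L := \prod_(_ <= _ < _ | _) _.
set R := \prod_(_ <= _ < _ | _) _.
have -> : L = \prod_(0 <= l < d.+1 | P l) ('X - (th l)%:P).
  by apply: eq_bigl => l; case: (eqVneq l j) => // ->; rewrite (negPf nPj).
by exists (c *: R); rewrite -scalerAl [R * _]mulrC.
Qed.

Lemma size_lagrange j : (j <= d)%N -> (size (lagrange j) <= d.+1)%N.
Proof.
move=> jd; rewrite lagrangeE; apply: leq_trans (size_scale_leq _ _) _.
rewrite -big_filter size_prod_XsubC -rem_filter ?iota_uniq // size_rem //.
  by rewrite size_iota subn0.
by rewrite mem_index_iota ltnS.
Qed.

Hypothesis th_inj : {in [pred i | (i <= d)%N] &, injective th}.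

Lemma lagrange_eval j k : (j <= d)%N -> (k <= d)%N ->
  (lagrange j).[th k] = (j == k)%:R.
Proof.
move=> jd kd; rewrite /lagrange horner_prod.
case: (eqVneq j k) => [<-|jk].
  rewrite big1_seq // => l /andP[lj]; rewrite mem_index_iota ltnS => ld.
  rewrite hornerZ hornerXsubC mulVf // subr_eq0; apply: contra lj => /eqP.
  by move/th_inj => -> //; rewrite inE.
rewrite big_mkcond (bigD1_seq k) ?iota_uniq ?mem_index_iota //= eq_sym jk.
by rewrite hornerZ hornerXsubC subrr mulr0 mul0r.
Qed.

(* The Lagrange polynomials form a partition of unity: sum_j l_j - 1 has degree
   at most d and vanishes at the d+1 distinct nodes. *)
Lemma sum_lagrange : \sum_(0 <= j < d.+1) lagrange j = 1.
Proof.
apply/eqP; rewrite -subr_eq0; apply/eqP.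
apply: (@roots_geq_poly_eq0 _ _ [seq th k | k <- index_iota 0 d.+1]).
- apply/allP => x /mapP[k]; rewrite mem_index_iota ltnS => kd ->.
  rewrite rootE hornerD hornerN hornerC horner_sum.
  rewrite (bigD1_seq k) ?iota_uniq ?mem_index_iota //= lagrange_eval // eqxx.
  rewrite big1_seq ?addr0 ?subrr // => l /andP[lk].
  by rewrite mem_index_iota ltnS => ld; rewrite lagrange_eval // (negPf lk).
- rewrite map_inj_in_uniq ?iota_uniq // => x y.
  by rewrite !mem_index_iota !ltnS => xd yd; apply: th_inj.
- rewrite size_map size_iota subn0.
  apply: leq_trans (size_polyD _ _) _; rewrite geq_max size_polyN size_poly1 andbT.
  rewrite big_seq; elim/big_ind: _ => [|p1 p2 h1 h2|k].
  + by rewrite size_poly0.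
  + by apply: leq_trans (size_polyD _ _) _; rewrite geq_max h1 h2.
  + by rewrite mem_index_iota ltnS => /size_lagrange.
Qed.

End LagrangeBasis.

Section PartitionOfUnity.
Variables (F : fieldType) (n : nat).

Lemma sumsmx_sup_seq (I : eqType) (r : seq I) (P : pred I) i m
    (A : 'M[F]_(m, n)) (B : I -> 'M[F]_n) :
  i \in r -> P i -> (A <= B i)%MS -> (A <= \sum_(j <- r | P j) B j)%MS.
Proof.
move=> ri Pi sAB; rewrite (big_rem i) //= Pi.
exact: submx_trans sAB (addsmxSl _ _).
Qed.

(* If the E_j sum to the identity, the E_j with S j have row space inside W and
   the others annihilate W, then the row spaces of the E_j with S j span W:
   W = W * sum_j E_j = sum_{S j} W * E_j. *)
Lemma partition_unity_span (I : eqType) (r : seq I) (S : pred I)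
    (E : I -> 'M[F]_n) (W : 'M[F]_n) :
  \sum_(j <- r) E j = 1%:M ->
  (forall j, j \in r -> S j -> (E j <= W)%MS) ->
  (forall j, j \in r -> ~~ S j -> W *m E j = 0) ->
  (\sum_(j <- r | S j) E j == W)%MS.
Proof.
move=> sumE EW WE; apply/andP; split.
  rewrite big_seq_cond; elim/big_ind: _ => [|X Y sX sY|j /andP[rj Sj]].
  - exact: sub0mx.
  - by rewrite addsmx_sub sX.
  - exact: EW.
rewrite -[W]mulmx1 -sumE mulmx_sumr (bigID S) /= [X in _ + X]big_seq_cond.
rewrite [X in _ + X]big1 ?addr0; last by move=> j /andP[rj nSj]; apply: WE.
rewrite big_seq_cond; apply: summx_sub => j /andP[rj Sj].
exact: sumsmx_sup_seq rj Sj (submxMl _ _).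
Qed.

Lemma dim0_eqmx m1 m2 (X : 'M[F]_(m1, 0)) (Y : 'M[F]_(m2, 0)) : (X == Y)%MS.
Proof. by apply/andP; split; rewrite thinmx0 sub0mx. Qed.

End PartitionOfUnity.

Section MatrixPolynomials.
Variables (F : fieldType) (n' : nat) (B : 'M[F]_n'.+1) (th : nat -> F).

(* Row spaces describe images of operators acting on columns, so polynomials
   in A are studied through the transpose of A. *)
Lemma horner_trmx p : (horner_mx B p)^T = horner_mx B^T p.
Proof.
elim/poly_ind: p => [|p c IH]; first by rewrite !rmorph0 trmx0.
rewrite !rmorphD !rmorphM /= !horner_mx_X !horner_mx_C linearD /= tr_scalar_mx.
rewrite -mulmxE trmx_mul IH; congr (_ + _).
have: comm_mx B^T (horner_mx B^T p) by apply: comm_mx_horner.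
by rewrite /comm_mx mulmxE => ->.
Qed.

Lemma flag_push_up (V : nat -> 'M[F]_n'.+1) lo hi :
  (forall m, (V m *m (B - (th m)%:M) <= V m.+1)%MS) -> (lo <= hi)%N ->
  (V lo *m horner_mx B (\prod_(lo <= l < hi) ('X - (th l)%:P)) <= V hi)%MS.
Proof.
move=> step /subnKC <-; elim: (hi - lo)%N => [|k IH].
  by rewrite addn0 big_geq // rmorph1 mulmx1.
rewrite addnS big_nat_recr ?leq_addr //= rmorphM /= rmorphB /=.
rewrite horner_mx_X horner_mx_C -mulmxE mulmxA.
exact: submx_trans (submxMr _ IH) (step _).
Qed.

Lemma flag_push_down (V : nat -> 'M[F]_n'.+1) lo hi :
  (forall m, (V m.+1 *m (B - (th m)%:M) <= V m)%MS) -> (lo <= hi)%N ->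
  (V hi *m horner_mx B (\prod_(lo <= l < hi) ('X - (th l)%:P)) <= V lo)%MS.
Proof.
move=> step /subnKC <-; elim: (hi - lo)%N => [|k IH].
  by rewrite addn0 big_geq // rmorph1 mulmx1.
rewrite addnS big_nat_recr ?leq_addr //= mulrC rmorphM /= rmorphB /=.
rewrite horner_mx_X horner_mx_C -mulmxE mulmxA.
exact: submx_trans (submxMr _ (step _)) IH.
Qed.

End MatrixPolynomials.

Section SpectralSpan.
Variables (F : fieldType) (n' : nat) (B : 'M[F]_n'.+1) (th : nat -> F) (d : nat).
Hypothesis th_inj : {in [pred i | (i <= d)%N] &, injective th}.

Lemma spectral_span (S : pred nat) (W : 'M[F]_n'.+1) :
  (horner_mx B (\prod_(0 <= l < d.+1 | ~~ S l) ('X - (th l)%:P)) <= W)%MS ->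
  W *m horner_mx B (\prod_(0 <= l < d.+1 | S l) ('X - (th l)%:P)) = 0 ->
  (\sum_(0 <= j < d.+1 | S j) horner_mx B (lagrange th d j) == W)%MS.
Proof.
move=> into kill; apply: partition_unity_span => [|j _ Sj|j _ nSj].
- by rewrite -rmorph_sum sum_lagrange // rmorph1.
- have [r ->] := @lagrange_factor F th d (fun l => ~~ S l) j (introT negPn Sj).
  rewrite rmorphM -mulmxE; exact: submx_trans (submxMl _ _) into.
- have [r ->] := lagrange_factor th d nSj.
  by rewrite mulrC rmorphM -mulmxE mulmxA kill mul0mx.
Qed.

End SpectralSpan.

Section GradedSpace.
Variables (F : fieldType) (n : nat) (g : 'I_n -> nat).

Definition gradeproj (P : pred nat) : 'M[F]_n := diag_mx (\row_a (P (g a))%:R).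

(* M has zero entry (a, b) whenever the grades of a and b are related by R;
   zero_on leq means that M strictly raises the grade, zero_on geq that it
   strictly lowers it. *)
Definition zero_on (R : rel nat) (M : 'M[F]_n) :=
  forall a b, R (g a) (g b) -> M a b = 0.

Lemma zero_onD R (M1 M2 : 'M[F]_n) :
  zero_on R M1 -> zero_on R M2 -> zero_on R (M1 + M2).
Proof. by move=> z1 z2 a b r; rewrite mxE z1 ?z2 ?addr0. Qed.

Lemma zero_onZ R k (M : 'M[F]_n) : zero_on R M -> zero_on R (k *: M).
Proof. by move=> z a b r; rewrite mxE z ?mulr0. Qed.

Lemma zero_on_mul_diag R (M : 'M[F]_n) (e : 'rV[F]_n) :
  zero_on R M -> zero_on R (M *m diag_mx e).
Proof. by move=> z a b r; rewrite mul_mx_diag mxE z ?mul0r. Qed.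

Lemma eq_gradeproj (P Q : pred nat) :
  (forall a, P (g a) = Q (g a)) -> gradeproj P = gradeproj Q.
Proof. by move=> PQ; congr diag_mx; apply/rowP => a; rewrite !mxE PQ. Qed.

Lemma gradeproj_full (P : pred nat) : (forall a, P (g a)) -> gradeproj P = 1%:M.
Proof.
move=> Pg; rewrite -diag_const_mx; congr diag_mx.
by apply/rowP => a; rewrite !mxE Pg.
Qed.

Lemma gradeproj_empty (P : pred nat) : (forall a, ~~ P (g a)) -> gradeproj P = 0.
Proof.
move=> nPg; rewrite -(linear0 (@diag_mx F n)); congr diag_mx.
by apply/rowP => a; rewrite !mxE (negPf (nPg a)).
Qed.

Lemma gradeprojM_sub (P Q : pred nat) (M : 'M[F]_n) :
  (forall a b, P (g a) -> ~~ Q (g b) -> M a b = 0) ->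
  (gradeproj P *m M <= gradeproj Q)%MS.
Proof.
move=> PQ; suff -> : gradeproj P *m M = gradeproj P *m M *m gradeproj Q.
  exact: submxMl.
apply/matrixP => a b; rewrite /gradeproj mul_mx_diag mul_diag_mx !mxE.
case: (boolP (Q (g b))) => Qb; first by rewrite mulr1.
by case: (boolP (P (g a))) => Pa; rewrite ?mul0r // PQ ?mulr0.
Qed.

Lemma sumsmx_gradeproj (r : seq nat) : uniq r ->
  (\sum_(j <- r) gradeproj (pred1 j) == gradeproj (fun k => (k \in r)%B))%MS.
Proof.
move=> ur; apply/andP; split.
  rewrite big_seq; elim/big_ind: _ => [|X Y sX sY|j rj]; rewrite ?sub0mx ?addsmx_sub ?sX //.
  rewrite -[gradeproj _]mulmx1; apply: gradeprojM_sub => a b.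
  by rewrite !mxE => /eqP gaj; case: eqP => // <-; rewrite gaj rj.
have -> : gradeproj (fun k => (k \in r)%B) = (\sum_(j <- r) gradeproj (pred1 j))%R.
  rewrite -raddf_sum; congr diag_mx; apply/rowP => a; rewrite !mxE summxE.
  rewrite -count_uniq_mem // -sum1_count natr_sum big_mkcond /=.
  by apply: eq_bigr => j _; rewrite !mxE eq_sym; case: eqP.
rewrite big_seq; apply: summx_sub => j rj.
exact: (sumsmx_sup_seq (P := xpredT) rj isT (submx_refl _)).
Qed.

Lemma sumsmx_gradeproj_range lo hi :
  (\sum_(lo <= j < hi) gradeproj (pred1 j) == gradeproj (fun k => lo <= k < hi)%N)%MS.
Proof.
rewrite -(@eq_gradeproj (fun k => (k \in index_iota lo hi)%B)) => [|a].
  exact/sumsmx_gradeproj/iota_uniq.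
by rewrite mem_index_iota.
Qed.

Variable th : nat -> F.

(* Entries of (D + N)^T - th_m, for D = diag(th_grade); the transpose accounts
   for operators acting on columns while row spaces are spanned by rows. *)
Lemma shifted_entry (N : 'M[F]_n) m a b :
  ((diag_mx (\row_c th (g c)) + N)^T - (th m)%:M) a b
    = N b a + (th (g a) - th m) *+ (a == b).
Proof.
rewrite !mxE; have [->|nab] := eqVneq a b; first by rewrite !mulr1n addrAC addrC.
by rewrite /= !mulr0n add0r subr0 addr0.
Qed.

Lemma raising_flag_step (N : 'M[F]_n) : zero_on leq N -> forall m,
  (gradeproj (leq m) *m ((diag_mx (\row_c th (g c)) + N)^T - (th m)%:M)
     <= gradeproj (leq m.+1))%MS.
Proof.
move=> Nz m; apply: gradeprojM_sub => a b ma; rewrite -leqNgt => bm.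
rewrite shifted_entry Nz ?add0r; last exact: leq_trans bm ma.
have [eab|_] := eqVneq a b; last by rewrite mulr0n.
rewrite -eab in bm; have -> : g a = m by apply/eqP; rewrite eqn_leq ma bm.
by rewrite subrr mul0rn.
Qed.

Lemma lowering_flag_step (N : 'M[F]_n) : zero_on geq N -> forall m,
  (gradeproj (fun k => k < m.+1)%N *m ((diag_mx (\row_c th (g c)) + N)^T - (th m)%:M)
     <= gradeproj (fun k => k < m)%N)%MS.
Proof.
move=> Nz m; apply: gradeprojM_sub => a b; rewrite ltnS -leqNgt => am mb.
rewrite shifted_entry Nz ?add0r; last exact: leq_trans am mb.
have [eab|_] := eqVneq a b; last by rewrite mulr0n.
rewrite -eab in mb; have -> : g a = m by apply/eqP; rewrite eqn_leq am mb.
by rewrite subrr mul0rn.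
Qed.

End GradedSpace.

Arguments gradeproj {F n}.

Section TriangularSpectrum.
Variables (F : fieldType) (d : nat) (th : nat -> F).
Hypothesis th_inj : {in [pred i | (i <= d)%N] &, injective th}.

Definition eigenproj n (A : 'M[F]_n) (j : nat) : 'M[F]_n :=
  foldr (fun l M => M *m ((th j - th l)^-1 *: (A - (th l)%:M))) 1%:M
        [seq l <- iota 0 d.+1 | l != j].

Lemma eigenproj_trmx n' (A : 'M[F]_n'.+1) j :
  (eigenproj A j)^T = horner_mx A^T (lagrange th d j).
Proof.
rewrite -horner_trmx; congr (_ ^T); rewrite /eigenproj /lagrange -big_filter.
rewrite /index_iota subn0.
elim: [seq l <- _ | _] => [|l s IH] /=; first by rewrite big_nil [RHS]rmorph1.
rewrite big_cons IH mulrC rmorphM /= [X in _ = _ * X]linearZ /= rmorphB /=.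
by rewrite horner_mx_X horner_mx_C mulmxE.
Qed.

Theorem sum_upper_eigenspaces n (g : 'I_n -> nat) (A N : 'M[F]_n) :
  (forall a, (g a <= d)%N) -> zero_on g leq N ->
  A = diag_mx (\row_a th (g a)) + N ->
  forall i, (i <= d)%N ->
  (\sum_(i <= j < d.+1) (eigenproj A j)^T
     == \sum_(i <= j < d.+1) gradeproj g (pred1 j))%MS.
Proof.
case: n g A N => [|n'] g A N gd Nz ->{A} i le_id; first exact: dim0_eqmx.
under eq_bigr do rewrite eigenproj_trmx.
have step := raising_flag_step th Nz.
set W := fun m => gradeproj g (leq m) : 'M[F]_n'.+1.
suff sumE : (\sum_(i <= j < d.+1)
               horner_mx (diag_mx (\row_a th (g a)) + N)^T (lagrange th d j) == W i)%MS.
  apply/eqmxP; apply: eqmx_trans (eqmxP sumE) (eqmx_sym (eqmxP _)).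
  rewrite /W -(@eq_gradeproj _ _ g (fun k => i <= k < d.+1)%N) ?sumsmx_gradeproj_range //.
  by move=> a; rewrite ltnS gd andbT.
rewrite (big_nat_widenl _ 0) //; apply: spectral_span => //=.
- have -> : \prod_(0 <= l < d.+1 | ~~ (i <= l)%N) ('X - (th l)%:P)
             = \prod_(0 <= l < i) ('X - (th l)%:P).
    rewrite [RHS](big_nat_widen _ _ d.+1) ?(leqW le_id) //.
    by apply: eq_bigl => l; rewrite ltnNge.
  rewrite -[horner_mx _ _]mul1mx -(@gradeproj_full F _ g (leq 0)) //.
  exact: (flag_push_up (V := W) step (leq0n i)).
- have -> : \prod_(0 <= l < d.+1 | (i <= l)%N) ('X - (th l)%:P)
             = \prod_(i <= l < d.+1) ('X - (th l)%:P) by rewrite [RHS](big_nat_widenl _ 0).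
  apply/eqP; rewrite -submx0 -(@gradeproj_empty F _ g (leq d.+1)) => [|a].
    exact: (flag_push_up (V := W) step (leqW le_id)).
  by rewrite -ltnNge ltnS gd.
Qed.

Theorem sum_lower_eigenspaces n (g : 'I_n -> nat) (A N : 'M[F]_n) :
  (forall a, (g a <= d)%N) -> zero_on g geq N ->
  A = diag_mx (\row_a th (g a)) + N ->
  forall i, (i <= d)%N ->
  (\sum_(0 <= j < i.+1) (eigenproj A j)^T
     == \sum_(0 <= j < i.+1) gradeproj g (pred1 j))%MS.
Proof.
case: n g A N => [|n'] g A N gd Nz ->{A} i le_id; first exact: dim0_eqmx.
under eq_bigr do rewrite eigenproj_trmx.
have step := lowering_flag_step th Nz.
set W := fun m => gradeproj g (fun k => k < m)%N : 'M[F]_n'.+1.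
suff sumE : (\sum_(0 <= j < i.+1)
               horner_mx (diag_mx (\row_a th (g a)) + N)^T (lagrange th d j) == W i.+1)%MS.
  apply/eqmxP; apply: eqmx_trans (eqmxP sumE) (eqmx_sym (eqmxP _)).
  by rewrite /W -(@eq_gradeproj _ _ g (fun k => 0 <= k < i.+1)%N) ?sumsmx_gradeproj_range.
rewrite (big_nat_widen _ _ d.+1) //; apply: spectral_span => //=.
- have -> : \prod_(0 <= l < d.+1 | ~~ (l < i.+1)%N) ('X - (th l)%:P)
             = \prod_(i.+1 <= l < d.+1) ('X - (th l)%:P).
    rewrite [RHS](big_nat_widenl _ 0) //.
    by apply: eq_bigl => l; rewrite -leqNgt.
  rewrite -[horner_mx _ _]mul1mx -(@gradeproj_full F _ g (fun k => k < d.+1)%N) => [|a].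
    exact: (flag_push_down (V := W) step (le_id : (i.+1 <= d.+1)%N)).
  by rewrite ltnS gd.
- have -> : \prod_(0 <= l < d.+1 | (l < i.+1)%N) ('X - (th l)%:P)
             = \prod_(0 <= l < i.+1) ('X - (th l)%:P) by rewrite [RHS](big_nat_widen _ _ d.+1).
  apply/eqP; rewrite -submx0 -(@gradeproj_empty F _ g (fun k => k < 0)%N) //.
  exact: (flag_push_down (V := W) step (leq0n i.+1)).
Qed.

End TriangularSpectrum.

Section TensorBasis.
Variables (F : fieldType) (d : nat).

Definition ny (s : basisT d) : nat := #|[pred k | s k]|.

Lemma ny_le s : (ny s <= d)%N.
Proof. by rewrite -[X in (_ <= X)%N]card_ord max_card. Qed.

Lemma ny_flip (s t : basisT d) k :
  (forall j, j != k -> s j = t j) -> ~~ s k -> t k -> ny t = (ny s).+1.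
Proof.
move=> st sk tk; rewrite /ny (cardD1 k) [in RHS](cardD1 k) !inE tk (negPf sk).
congr _.+1; apply: eq_card => j; rewrite !inE.
by case: (eqVneq j k) => //= jk; rewrite st.
Qed.

Lemma prod_agree (s t : basisT d) (P : pred 'I_d) (G : 'I_d -> F) :
  (forall j, s j != t j -> G j = 0) -> \prod_(j | P j) G j != 0 ->
  forall j, P j -> s j = t j.
Proof.
move=> G0 /prodf_neq0 nz j Pj; apply/eqP; apply: contraTT (nz j Pj).
by move/G0 ->; rewrite negbK.
Qed.

Lemma single_site_support (s t : basisT d) (e : 'I_d -> bool -> bool -> F)
    (L R : 'I_d -> 'I_d -> F) :
  (forall k j, s j != t j -> L k j = 0) -> (forall k j, s j != t j -> R k j = 0) ->
  \sum_(k < d) ((\prod_(j < d | (j < k)%N) L k j) * e k (s k) (t k) *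
                 \prod_(j < d | (k < j)%N) R k j) != 0 ->
  exists2 k, e k (s k) (t k) != 0 & forall j, j != k -> s j = t j.
Proof.
move=> L0 R0 nz.
have [k] : exists k : 'I_d, (\prod_(j < d | (j < k)%N) L k j) * e k (s k) (t k) *
                              \prod_(j < d | (k < j)%N) R k j != 0.
  apply/existsP; apply: contraNT nz => /existsPn z.
  by rewrite big1 // => k _; apply/eqP; move: (z k); rewrite negbK.
rewrite !mulf_eq0 !negb_or => /andP[/andP[nzL nze] nzR]; exists k => // j jk.
have [jk'|kj|eq] := ltngtP j k.
- exact: prod_agree (L0 k) nzL j jk'.
- exact: prod_agree (R0 k) nzR j kj.
- by move: jk; rewrite (ord_inj eq) eqxx.
Qed.

End TensorBasis.

Section Generators.
Variables (F : fieldType) (q : F) (d : nat) (alpha : 'I_d -> F).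

Definition gr (x : 'I_(dimV d)) : nat := ny (enum_val x).

Lemma gr_le x : (gr x <= d)%N.
Proof. exact: ny_le. Qed.

Definition raising_site (e : 'I_d -> bool -> bool -> F) :=
  forall k b b', e k b b' != 0 -> ~~ b && b'.
Definition lowering_site (e : 'I_d -> bool -> bool -> F) :=
  forall k b b', e k b b' != 0 -> b && ~~ b'.

Lemma site_raise e (s t : basisT d) : raising_site e ->
  (exists2 k, e k (s k) (t k) != 0 & forall j, j != k -> s j = t j) ->
  ny t = (ny s).+1.
Proof. by move=> eR [k /eR /andP[sk tk] st]; apply: ny_flip st sk tk. Qed.

Lemma site_lower e (s t : basisT d) : lowering_site e ->
  (exists2 k, e k (s k) (t k) != 0 & forall j, j != k -> s j = t j) ->
  ny s = (ny t).+1.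
Proof.
move=> eL [k /eL /andP[sk tk] st]; apply: (ny_flip (k := k)) tk sk => j /st.
by move->.
Qed.

Lemma coefP_support (Kv : bool -> F) (e : 'I_d -> bool -> bool -> F)
    (s t : basisT d) : coefP Kv e s t != 0 ->
  exists2 k, e k (s k) (t k) != 0 & forall j, j != k -> s j = t j.
Proof.
apply: single_site_support => k j /negPf sj; first by rewrite sj.
by rewrite sj mul0r.
Qed.

Lemma coefM_support (Kv : bool -> F) (e : 'I_d -> bool -> bool -> F)
    (s t : basisT d) : Defs.coefM Kv e s t != 0 ->
  exists2 k, e k (s k) (t k) != 0 & forall j, j != k -> s j = t j.
Proof.
apply: single_site_support => k j /negPf sj; last by rewrite sj.
by rewrite sj mul0r.
Qed.

Lemma opmx_raising (c : basisT d -> basisT d -> F) :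
  (forall s t, c s t != 0 -> ny t = (ny s).+1) -> zero_on gr leq (opmx c).
Proof.
move=> cR a b; rewrite mxE; apply: contraTeq => /cR.
by rewrite /gr => ->; rewrite ltnn.
Qed.

Lemma opmx_lowering (c : basisT d -> basisT d -> F) :
  (forall s t, c s t != 0 -> ny s = (ny t).+1) -> zero_on gr geq (opmx c).
Proof.
move=> cL a b; rewrite mxE; apply: contraTeq => /cL.
by rewrite /gr => ->; rewrite /= ltnn.
Qed.

Lemma e0p_raising : zero_on gr leq (e0pmx q alpha).
Proof.
apply: opmx_raising => s t /coefP_support; apply: site_raise.
by move=> k [] []; rewrite /e0p1 ?eqxx.
Qed.

Lemma e1m_raising : zero_on gr leq (e1mmx q d).
Proof.
apply: opmx_raising => s t /coefM_support; apply: site_raise.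
by move=> k [] []; rewrite /e1m1 ?eqxx.
Qed.

Lemma e1p_lowering : zero_on gr geq (e1pmx q d).
Proof.
apply: opmx_lowering => s t /coefP_support; apply: site_lower.
by move=> k [] []; rewrite /e1p1 ?eqxx.
Qed.

Lemma e0m_lowering : zero_on gr geq (e0mmx q alpha).
Proof.
apply: opmx_lowering => s t /coefM_support; apply: site_lower.
by move=> k [] []; rewrite /e0m1 ?eqxx.
Qed.

End Generators.

Arguments gr {d}.

Section CartanPart.
Variables (F : fieldType) (q : F) (d : nat).
Hypothesis qn0 : q != 0.

Lemma prod_Kval (Kv : bool -> F) (s : basisT d) :
  \prod_(j < d) Kv (s j) = Kv true ^+ ny s * Kv false ^+ (d - ny s).
Proof.
rewrite (bigID (fun j => s j)) /=.
rewrite (eq_bigr (fun=> Kv true)) => [|j ->] //.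
rewrite [X in _ * X](eq_bigr (fun=> Kv false)) => [|j /negPf ->] //.
rewrite !prodr_const; congr (_ * _ ^+ _).
apply/eqP; rewrite -(eqn_add2l (ny s)) subnKC ?ny_le //.
rewrite -[X in _ == X](card_ord d) -(cardC [pred j | s j]).
by apply/eqP; congr (_ + _); apply: eq_card.
Qed.

Lemma Kmx_diag (Kv : bool -> F) :
  opmx (Defs.coefK Kv) = diag_mx (\row_x \prod_(j < d) Kv ((enum_val x : basisT d) j)).
Proof.
apply/matrixP => x y; rewrite !mxE /Defs.coefK (inj_eq enum_val_inj) eq_sym.
by rewrite mulr_natl; case: eqP => [->|].
Qed.

Lemma K0_diag : K0mx q d = diag_mx (\row_x q ^ (Posz (2 * gr x)%N - Posz d)).
Proof.
rewrite /K0mx Kmx_diag; congr diag_mx; apply/rowP => x; rewrite !mxE prod_Kval /=.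
have le := gr_le x; rewrite -/(gr x).
have -> : Posz (2 * gr x)%N - Posz d = Posz (gr x) + - Posz (d - gr x)%N.
  by rewrite -subzn // opprB addrA -PoszD addnn -mul2n.
by rewrite expfzDr // -exprnN exprVn.
Qed.

Lemma K1_diag : K1mx q d = diag_mx (\row_x q ^ (Posz d - Posz (2 * gr x)%N)).
Proof.
rewrite /K1mx Kmx_diag; congr diag_mx; apply/rowP => x; rewrite !mxE prod_Kval /=.
have le := gr_le x; rewrite -/(gr x).
have -> : Posz d - Posz (2 * gr x)%N = Posz (d - gr x)%N + - Posz (gr x).
  by rewrite -subzn // -addrA -opprD -PoszD addnn -mul2n.
by rewrite expfzDr // -exprnN exprVn mulrC.
Qed.

Lemma cartan_diag (a b c : F) :
  a%:M + b *: K0mx q d + c *: K1mx q d = diag_mx (\row_x theta q a b c d (gr x)).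
Proof.
rewrite K0_diag K1_diag -diag_const_mx -!linearZ -!linearD /=; congr diag_mx.
by apply/rowP => x; rewrite !mxE.
Qed.

End CartanPart.

Section LeonardPair.
Variables (F : fieldType) (q : F) (d : nat) (alpha : 'I_d -> F).
Hypothesis qn0 : q != 0.

Lemma Amx_triangular a b c u v :
  Amx q alpha a b c u v = diag_mx (\row_x theta q a b c d (gr x))
                          + (u *: e0pmx q alpha + v *: (e1mmx q d *m K1mx q d)).
Proof. by rewrite /Amx cartan_diag. Qed.

Lemma Amx_raising u v :
  zero_on gr leq (u *: e0pmx q alpha + v *: (e1mmx q d *m K1mx q d)).
Proof.
apply: zero_onD; apply: zero_onZ; first exact: e0p_raising.
by rewrite /K1mx Kmx_diag; apply/zero_on_mul_diag/e1m_raising.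
Qed.

Lemma Asmx_triangular as_ bs cs us vs :
  Asmx q alpha as_ bs cs us vs = diag_mx (\row_x theta q as_ bs cs d (gr x))
                                 + (us *: e1pmx q d + vs *: (e0mmx q alpha *m K0mx q d)).
Proof. by rewrite /Asmx cartan_diag. Qed.

Lemma Asmx_lowering us vs :
  zero_on gr geq (us *: e1pmx q d + vs *: (e0mmx q alpha *m K0mx q d)).
Proof.
apply: zero_onD; apply: zero_onZ; first exact: e1p_lowering.
by rewrite /K0mx Kmx_diag; apply/zero_on_mul_diag/e0m_lowering.
Qed.

End LeonardPair.

Lemma Umx_gradeproj (F : fieldType) d j : Umx F d j = gradeproj (@gr d) (pred1 j).
Proof.
apply/matrixP => x y; rewrite !mxE /gr /ny.
by case: eqP => [->|_]; rewrite ?andbT ?andbF ?mulr1n ?mulr0n.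
Qed.

Unset Implicit Arguments.
Set Strict Implicit.

Theorem lemma9p7 (F : closedFieldType) (d : nat)
  (q a b c as_ bs cs : F) (alpha : 'I_d -> F) (u v us vs : F) :
  q != 0 -> b != 0 -> c != 0 -> bs != 0 -> cs != 0 ->
  q ^+ 2 != 1 -> q ^+ 2 != -1 ->
  (forall i j : nat, (i <= d)%N -> (j <= d)%N ->
     theta q a b c d i = theta q a b c d j -> i = j) ->
  (forall i j : nat, (i <= d)%N -> (j <= d)%N ->
     theta q as_ bs cs d i = theta q as_ bs cs d j -> i = j) ->
  (forall k, alpha k != 0) ->
  u * vs = - (b * bs * q^-1 * (q - q^-1) ^+ 2) ->
  v * us = - (c * cs * q^-1 * (q - q^-1) ^+ 2) ->
  forall i : nat, (i <= d)%N ->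
    ((\sum_(i <= j < d.+1)
        img (Eidem (Amx q alpha a b c u v) (theta q a b c d) j))%MS
      == (\sum_(i <= j < d.+1) Umx F d j)%MS)%MS
    /\
    ((\sum_(0 <= j < i.+1)
        img (Eidem (Asmx q alpha as_ bs cs us vs) (theta q as_ bs cs d) j))%MS
      == (\sum_(0 <= j < i.+1) Umx F d j)%MS)%MS.
Proof.
move=> qn0 _ _ _ _ _ _ th_inj ths_inj _ _ _ i le_id.
under [X in (_ == X)%MS]eq_bigr do rewrite Umx_gradeproj.
under [X in _ /\ (_ == X)%MS]eq_bigr do rewrite Umx_gradeproj.
split.
- exact: (sum_upper_eigenspaces th_inj (@gr_le d) (Amx_raising q alpha u v)
                                (Amx_triangular alpha qn0 a b c u v) le_id).
- exact: (sum_lower_eigenspaces ths_inj (@gr_le d) (Asmx_lowering q alpha us vs)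
                                (Asmx_triangular alpha qn0 as_ bs cs us vs) le_id).
Qed.
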